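(* Let $C$ be a conformal algebra and let $f(a_1,\dots,a_n)=\sum_{\sigma\in S_n} t_\sigma(a_{1\sigma},\dots,a_{n\sigma})$ be a homogeneous multilinear non-associative polynomial over $\Bbbk$. If the coefficient algebra $\operatorname{Coeff} C$ satisfies the identity $f=0$, then $C$, regarded as a pseudoalgebra, satisfies the pseudo-identity $f^*=0$, i.e. $$\sum_{\sigma\in S_n}(\sigma\otimes_H \mathrm{id}_C)\, t^*_\sigma(a_{1\sigma},\dots,a_{n\sigma})=0 \quad\text{in } H^{\otimes n}\otimes_H C$$ for all $a_1,\dots,a_n\in C$.
   Context: Let $\Bbbk$ be a field of characteristic $0$ and $H=\Bbbk[D]$ the polynomial algebra, regarded as a Hopf algebra with $\Delta(D)=D\otimes1+1\otimes D$, $\varepsilon(D)=0$, $S(D)=-D$. Sweedler notation: $\Delta(f)=f_{(1)}\otimes f_{(2)}$; iterated coproduct $\Delta^{(1)}=\mathrm{id}_H$, $\Delta^{(k+1)}=(\mathrm{id}_H\otimes\Delta^{(k)})\Delta$. $H$ acts on $H^{\otimes n}$ from the right by $(f_1\otimes\cdots\otimes f_n)h=f_1h_{(1)}\otimes\cdots\otimes f_nh_{(n)}$, and for a left $H$-module $M$ the space $H^{\otimes n}\otimes_H M$ is formed with respect to this action (so $H\otimes_H M\cong M$). A conformal algebra is a unital left $H$-module $C$ with $\Bbbk$-bilinear operations $a_{(n)}b$, $n\ge0$, such that for all $a,b\in C$: $a_{(n)}b=0$ for all sufficiently large $n$; $(Da)_{(n)}b=-n\,a_{(n-1)}b$ and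 $a_{(n)}(Db)=D(a_{(n)}b)+n\,a_{(n-1)}b$. Pseudoproduct: $a*b=\sum_{s\ge0}\frac{(-D)^s}{s!}\otimes1\otimes_H(a_{(s)}b)\in (H\otimes H)\otimes_H C$. Expanded pseudoproduct: for $F\in H^{\otimes n}$, $G\in H^{\otimes m}$, $a,b\in C$ with $a*b=\sum_i f_i\otimes g_i\otimes_H c_i$, set $(F\otimes_H a)*(G\otimes_H b)=\sum_i F\Delta^{(n)}(f_i)\otimes G\Delta^{(m)}(g_i)\otimes_H c_i\in H^{\otimes(n+m)}\otimes_H C$ (extended linearly). Coefficient algebra: $\operatorname{Coeff}C=\Bbbk[t,t^{-1}]\otimes_H C$, where $\Bbbk[t,t^{-1}]$ is a right $H$-module via $t^nD=-nt^{n-1}$; writing $a(n)=t^n\otimes_H a$, the (non-associative in general) multiplication is $a(n)b(m)=\sum_{s\ge0}\binom{n}{s}(a_{(s)}b)(n+m-s)$. Pseudo-form of an identity: write a homogeneous multilinear polynomial as $f(a_1,\dots,a_n)=\sum_{\sigma\in S_n}t_\sigma(a_{1\sigma},\dots,a_{n\sigma})$, where $i\sigma$ is the image of $i$ under $\sigma$ and each $t_\sigma(b_1,\dots,b_n)$ is a linear combination of bracketings of the word $b_1b_2\cdots b_n$ (letters in this order). For a bracketing $t$, $t^*(b_1,\dots,b_n)\in H^{\otimes n}\otimes_H C$ is obtained by replacing every product by the expanded pseudoproduct, each $b_i\in C$ being regarded as $1\otimes_H b_i\in H\otimes_H C$; extend linearly. For $\sigma\in S_n$, $\sigma\otimes_H\mathrm{id}_C$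 denotes the map on $H^{\otimes n}\otimes_H C$ induced by the permutation of tensor factors of $H^{\otimes n}$ sending the $k$-th factor to position $k\sigma$ (so in $(\sigma\otimes_H\mathrm{id}_C)t^*(a_{1\sigma},\dots,a_{n\sigma})$ the factor attached to the argument $a_j$ stands in position $j$). Then $f^*(a_1,\dots,a_n)=\sum_{\sigma}(\sigma\otimes_H\mathrm{id}_C)t^*_\sigma(a_{1\sigma},\dots,a_{n\sigma})$. *)

From HB Require Import structures.
From mathcomp Require Import all_boot all_order all_algebra all_fingroup.
From mathcomp Require Import mpoly.
Set Implicit Arguments. Unset Strict Implicit. Unset Printing Implicit Defensive.
Import Order.TTheory GRing.Theory Num.Theory.
Local Open Scope ring_scope.

(* H = k[D].  A left H-module is a k-vector space C with an endomorphism D;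
   h . c := sum_i h_i D^i c.                                            *)
Definition hact (F : fieldType) (C : lmodType F) (D : C -> C)
    (h : {poly F}) (c : C) : C :=
  \sum_(i < size h) h`_i *: iter i D c.

(* Conformal algebra structure on (C, D) with n-products prod s a b = a_(s) b.
   Locality ("a_(s) b = 0 for all sufficiently large s") is witnessed by a
   bound function N (any conformal algebra admits one, by choice).      *)
Definition is_conformal (F : fieldType) (C : lmodType F) (D : C -> C)
    (prod : nat -> C -> C -> C) (N : C -> C -> nat) : Prop :=
  (forall (k : F) x y, D (k *: x + y) = k *: D x + D y) /\
  (forall s (k : F) x y z, prod s (k *: x + y) z = k *: prod s x z + prod s y z) /\
  (forall s (k : F) x y z, prod s z (k *: x + y) = k *: prod s z x + prod s z y) /\
  (forall a b s, (N a b <= s)%N -> prod s a b = 0) /\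
  (forall s a b, prod s (D a) b = - (s%:R *: prod s.-1 a b)) /\
  (forall s a b, prod s a (D b) = D (prod s a b) + s%:R *: prod s.-1 a b).

(* Bracketings: binary trees; the letters b_1 ... b_k of a word are placed
   on the leaves from left to right.                                   *)
Inductive brk : Type := BLeaf | BNode of brk & brk.

Fixpoint leaves (t : brk) : nat :=
  match t with BLeaf => 1%N | BNode l r => (leaves l + leaves r)%N end.

Fixpoint brk_eval (X : Type) (mul : X -> X -> X) (t : brk) (g : nat -> X)
    (o : nat) : X :=
  match t with
  | BLeaf => g o
  | BNode l r => mul (brk_eval mul l g o) (brk_eval mul r g (o + leaves l))
  end.

(* A homogeneous multilinear polynomial of degree n is given by the family
   (t_sigma)_{sigma in S_n}, each t_sigma a linear combination of
   bracketings with n leaves:  f(a_1..a_n) = sum_sigma t_sigma(a_{1sigma},..).*)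
Definition ml_poly (F : fieldType) (n : nat) := 'S_n -> seq (F * brk).

Definition ml_poly_wf (F : fieldType) n (P : ml_poly F n) : Prop :=
  forall s : 'S_n, all (fun p => leaves p.2 == n) (P s).

(* arguments b_i = a_{i sigma} (0-based), as a nat-indexed family *)
Definition perm_args (X : Type) (x0 : X) n (s : 'S_n) (a : 'I_n -> X) : nat -> X :=
  fun i => if insub i is Some j then a (s j) else x0.

(* Coefficient algebra Coeff C = k[t,t^-1] (x)_H C.
   An element is represented by a formal sum  sum_j a_j(n_j)  given as a
   list of pairs (n_j, a_j), a(n) = t^n (x)_H a.                       *)
Definition coeff_rep (F : fieldType) (C : lmodType F) := seq (int * C).

Definition binZ (F : fieldType) (n : int) (s : nat) : F :=
  (\prod_(j < s) (n - (j : nat)%:Z)%:~R) / (s`!)%:R.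

(* a(n) b(m) = sum_s binom(n,s) (a_(s) b)(n+m-s), extended bilinearly *)
Definition coeff_mul (F : fieldType) (C : lmodType F)
    (prod : nat -> C -> C -> C) (N : C -> C -> nat)
    (x y : coeff_rep C) : coeff_rep C :=
  flatten [seq flatten [seq
     [seq ((p.1 + q.1 - (s : nat)%:Z)%R, binZ F p.1 s *: prod s p.2 q.2)
        | s <- iota 0 (N p.2 q.2)] | q <- y] | p <- x].

Definition coeff_scale (F : fieldType) (C : lmodType F) (k : F)
    (x : coeff_rep C) : coeff_rep C := [seq (p.1, k *: p.2) | p <- x].

(* A formal sum represents 0 in k[t,t^-1] (x)_H C iff it is killed by every
   H-balanced k-bilinear map k[t,t^-1] x C -> W (universal property of the
   tensor product).  Such a map is determined by gam n c := beta(t^n, c),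
   linear in c, and H-balancedness is beta(t^n D, c) = beta(t^n, D c), i.e.
   gam n (D c) = -n gam (n-1) c since t^n D = -n t^(n-1).              *)
Definition coeff_zero (F : fieldType) (C : lmodType F) (D : C -> C)
    (x : coeff_rep C) : Prop :=
  forall (W : lmodType F) (gam : int -> C -> W),
    (forall n (k : F) c c', gam n (k *: c + c') = k *: gam n c + gam n c') ->
    (forall n c, gam n (D c) = - (n%:~R *: gam (n - 1)%R c)) ->
    \sum_(p <- x) gam p.1 p.2 = 0.

Definition coeff_eval (F : fieldType) (C : lmodType F)
    (prod : nat -> C -> C -> C) (N : C -> C -> nat) n (P : ml_poly F n)
    (x : 'I_n -> coeff_rep C) : coeff_rep C :=
  flatten [seq flatten [seq coeff_scale p.1
        (brk_eval (coeff_mul prod N) p.2 (perm_args [::] s x) 0)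
      | p <- P s] | s <- enum [set: 'S_n]].

Definition coeff_satisfies (F : fieldType) (C : lmodType F) (D : C -> C)
    (prod : nat -> C -> C -> C) (N : C -> C -> nat) n (P : ml_poly F n) : Prop :=
  forall x : 'I_n -> coeff_rep C, coeff_zero D (coeff_eval prod N P x).

(* H^{(x) n} = k[D_1,...,D_n] = {mpoly F[n]} (the i-th tensor factor is the
   variable 'X_i).  Elements of H^{(x) n} (x)_H C are represented by formal
   sums sum_j F_j (x)_H c_j, i.e. lists of pairs (F_j, c_j).                                 *)
Definition pseudo_rep (F : fieldType) (C : lmodType F) (n : nat) :=
  seq ({mpoly F[n]} * C).

Definition Delta (F : fieldType) (n : nat) (h : {poly F}) : {mpoly F[n]} :=
  (map_poly (fun c => c%:MP) h).[\sum_(i < n) 'X_i].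

Definition pseudo_zero (F : fieldType) (C : lmodType F) (D : C -> C) n
    (x : pseudo_rep C n) : Prop :=
  forall (W : lmodType F) (beta : {mpoly F[n]} -> C -> W),
    (forall (k : F) G G' c, beta (k *: G + G') c = k *: beta G c + beta G' c) ->
    (forall (k : F) G c c', beta G (k *: c + c') = k *: beta G c + beta G c') ->
    (forall G (h : {poly F}) c, beta (G * Delta n h) c = beta G (hact D h c)) ->
    \sum_(p <- x) beta p.1 p.2 = 0.

(* Sub-block sum D_{o+1} + ... + D_{o+k} (0-based variables o .. o+k-1):
   the image of Delta^{(k)}(D) when H^{(x) k} is placed in the tensor
   positions o+1 .. o+k of H^{(x) n}.                                   *)
Definition block_sum (F : fieldType) n (o k : nat) : {mpoly F[n]} :=
  \sum_(i < n | (o <= i < o + k)%N) 'X_i.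

(* Expanded pseudoproduct of x (occupying the tensor positions o..o+k-1)
   and y (occupying the next positions):
   (G (x)_H a) * (G' (x)_H b)
     = sum_s G Delta^{(k)}((-D)^s/s!) (x) G' (x)_H (a_(s) b).           *)
Definition pseudo_mul (F : fieldType) (C : lmodType F)
    (prod : nat -> C -> C -> C) (N : C -> C -> nat) n (o k : nat)
    (x y : pseudo_rep C n) : pseudo_rep C n :=
  flatten [seq flatten [seq
     [seq (p.1 * (((s`!)%:R : F)^-1 *: (- block_sum F n o k) ^+ s) * q.1,
           prod s p.2 q.2)
        | s <- iota 0 (N p.2 q.2)] | q <- y] | p <- x].

(* t^*(b_{o+1}, ..., b_{o+leaves t}), each b_i seen as 1 (x)_H b_i *)
Fixpoint pseudo_eval (F : fieldType) (C : lmodType F)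
    (prod : nat -> C -> C -> C) (N : C -> C -> nat) n (t : brk)
    (g : nat -> C) (o : nat) : pseudo_rep C n :=
  match t with
  | BLeaf => [:: (1, g o)]
  | BNode l r =>
      pseudo_mul prod N o (leaves l)
        (pseudo_eval prod N n l g o) (pseudo_eval prod N n r g (o + leaves l))
  end.

(* sigma (x)_H id_C: the k-th tensor factor goes to position k sigma, i.e.
   the variable 'X_k is renamed 'X_(sigma k). *)
Definition perm_factors (F : fieldType) (C : lmodType F) n (s : 'S_n)
    (x : pseudo_rep C n) : pseudo_rep C n :=
  [seq (p.1 \mPo [tuple 'X_(s i) | i < n], p.2) | p <- x].

Definition pseudo_poly_eval (F : fieldType) (C : lmodType F)
    (prod : nat -> C -> C -> C) (N : C -> C -> nat) n (P : ml_poly F n)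
    (a : 'I_n -> C) : pseudo_rep C n :=
  flatten [seq flatten [seq
       [seq (p.1 *: q.1, q.2)
          | q <- perm_factors s (pseudo_eval prod N n p.2 (perm_args 0 s a) 0)]
      | p <- P s] | s <- enum [set: 'S_n]].

From HB Require Import structures.
From mathcomp Require Import all_boot all_order all_algebra all_fingroup.
From mathcomp Require Import mpoly.
From mathcomp Require Import ring zify.
Set Implicit Arguments. Unset Strict Implicit. Unset Printing Implicit Defensive.
Import Order.TTheory GRing.Theory Num.Theory.
Local Open Scope ring_scope.

(* For m : 'I_n -> int, pairing H^⊗n with t^(m 1) ⊗ ... ⊗ t^(m n) and multiplying out
   defines a map Phi_m : H^⊗n ⊗_H C -> Coeff C.  Since t^a (-D)^s / s! = binom(a, s) t^(a-s),
   Phi_m turns expanded pseudoproducts into products in Coeff C, so by induction on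
   bracketings Phi_m (f^*(a_1, ..., a_n)) = f(a_1(m 1), ..., a_n(m n)) = 0.
   Followed by the residue Coeff C -> C, the maps Phi_m separate the points of H^⊗n ⊗_H C:
   using D_1 + ... + D_n to eliminate D_i0, every element is a sum of terms D^e ⊗_H c with
   e_i0 = 0, and for such e the weights m_i = e_i (i <> i0), m_i0 = -1 pick out exactly
   the coefficient of D^e, up to a factor that is nonzero in characteristic 0. *)

Section LinearFacts.
Variables (F : fieldType) (U V : lmodType F) (f : U -> V).
Hypothesis f_lin : linear f.

Let fL : {linear U -> V} := HB.pack f (GRing.isLinear.Build F U V *:%R f f_lin).

Lemma linP a x y : f (a *: x + y) = a *: f x + f y. Proof. exact: f_lin. Qed.

Lemma lin0 : f 0 = 0. Proof. exact: (raddf0 fL). Qed.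

Lemma linZ a x : f (a *: x) = a *: f x. Proof. exact: (linearZZ fL). Qed.

Lemma linB x y : f (x - y) = f x - f y. Proof. exact: (raddfB fL). Qed.

Lemma lin_sum I r (P : pred I) (E : I -> U) :
  f (\sum_(i <- r | P i) E i) = \sum_(i <- r | P i) f (E i).
Proof. exact: (raddf_sum fL). Qed.

End LinearFacts.

Section MonomialLift.
Variables (F : fieldType) (n : nat) (V : lmodType F).
Implicit Types (phi psi : 'X_{1..n} -> V) (G Q : {mpoly F[n]}).

Definition mlift phi G : V := \sum_(e <- msupp G) G@_e *: phi e.

Lemma mlift_sumE phi G (s : seq 'X_{1..n}) :
  uniq s -> {subset msupp G <= s} -> mlift phi G = \sum_(e <- s) G@_e *: phi e.
Proof.
move=> us sub; rewrite (bigID (mem (msupp G))) /=.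
rewrite [X in _ + X]big1 ?addr0 => [|e /memN_msupp_eq0 ->]; last exact: scale0r.
rewrite -big_filter; apply: perm_big; apply: uniq_perm; rewrite ?filter_uniq //.
by move=> e; rewrite mem_filter; case: (boolP (e \in msupp G)) => // /sub ->.
Qed.

Lemma mlift_is_linear phi : linear (mlift phi).
Proof.
move=> a G Q; set s := msupp G ++ msupp Q ++ msupp (a *: G + Q).
have us : uniq (undup s) := undup_uniq s.
have inS H : {subset msupp H <= s} -> {subset msupp H <= undup s}.
  by move=> sub e /sub; rewrite mem_undup.
have sG : {subset msupp G <= undup s} by apply: inS => e; rewrite !mem_cat => ->.
have sQ : {subset msupp Q <= undup s}.
  by apply: inS => e; rewrite !mem_cat => ->; rewrite orbT.
have sGQ : {subset msupp (a *: G + Q) <= undup s}.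
  by apply: inS => e; rewrite !mem_cat => ->; rewrite !orbT.
rewrite !(mlift_sumE phi us) //.
rewrite scaler_sumr -big_split; apply: eq_bigr => e _.
by rewrite mcoeffD mcoeffZ scalerDl scalerA.
Qed.

Lemma mliftX phi e : mlift phi 'X_[e] = phi e.
Proof. by rewrite /mlift msuppX big_seq1 mcoeffX eqxx scale1r. Qed.

Lemma mlift1 phi : mlift phi 1 = phi 0%MM.
Proof. by rewrite -mpolyX0 mliftX. Qed.

Lemma eq_mlift phi psi G : {in msupp G, phi =1 psi} -> mlift phi G = mlift psi G.
Proof. by move=> eq_phi; apply: eq_big_seq => e /eq_phi ->. Qed.

Lemma mlift_phi0 G : mlift (fun=> 0) G = 0.
Proof. by rewrite /mlift big1 // => e _; rewrite scaler0. Qed.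

Lemma mlift_phi_linear a phi psi G :
  mlift (fun e => a *: phi e + psi e) G = a *: mlift phi G + mlift psi G.
Proof.
rewrite /mlift scaler_sumr -big_split; apply: eq_bigr => e _ /=.
by rewrite scalerDr !scalerA mulrC.
Qed.

Lemma mlift_phiZ a phi G : mlift (fun e => a *: phi e) G = a *: mlift phi G.
Proof. by rewrite /mlift scaler_sumr; apply: eq_bigr => e _; rewrite !scalerA mulrC. Qed.

Lemma mlift_phi_sum I r (P : pred I) (phi : I -> 'X_{1..n} -> V) G :
  mlift (fun e => \sum_(i <- r | P i) phi i e) G = \sum_(i <- r | P i) mlift (phi i) G.
Proof. by rewrite /mlift exchange_big; apply: eq_bigr => e _; rewrite scaler_sumr. Qed.

Lemma mlift_mul phi G Q :
  mlift phi (G * Q) = mlift (fun e => mlift (fun f => phi (e + f)%MM) Q) G.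
Proof.
rewrite mpolyME (lin_sum (mlift_is_linear phi)) big_allpairs.
apply: eq_bigr => e _; rewrite [in RHS]/mlift scaler_sumr; apply: eq_bigr => f _.
by rewrite (linZ (mlift_is_linear phi)) mliftX scalerA.
Qed.

Lemma mlift_mulX phi G i :
  mlift phi (G * 'X_i) = mlift (fun e => phi (e + U_(i))%MM) G.
Proof. by rewrite mlift_mul; apply: eq_mlift => e _; rewrite mliftX. Qed.

End MonomialLift.

Lemma eq_linear_mpoly (F : fieldType) n (V : lmodType F) (f g : {mpoly F[n]} -> V) G :
  linear f -> linear g -> {in msupp G, forall e, f 'X_[e] = g 'X_[e]} -> f G = g G.
Proof.
move=> f_lin g_lin eq_fg; rewrite (mpolyE G) (lin_sum f_lin) (lin_sum g_lin).
by apply: eq_big_seq => e eG; rewrite (linZ f_lin) (linZ g_lin) eq_fg.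
Qed.

Section TCoefficients.
Variables (F : fieldType) (n : nat).
Implicit Types (m : 'I_n -> int) (e f : 'X_{1..n}).

(* In k[t,t^-1], where t^a D = -a t^(a-1), one has t^a D^k = tcoef a k t^(a-k). *)
Definition tcoef (a : int) (k : nat) : F := \prod_(j < k) (j%:R - a%:~R).

Definition mtcoef m e : F := \prod_(i < n) tcoef (m i) (e i).

Lemma mtcoef0 m : mtcoef m 0%MM = 1.
Proof. by rewrite /mtcoef big1 // => i _; rewrite mnm0E /tcoef big_ord0. Qed.

Lemma mtcoefU m e i : mtcoef m (e + U_(i))%MM = mtcoef m e * ((e i)%:R - (m i)%:~R).
Proof.
rewrite /mtcoef (bigD1 i) //= [in RHS](bigD1 i) //= mnmDE mnm1E eqxx addn1.
rewrite /tcoef big_ord_recr -!mulrA; congr (_ * _); rewrite mulrC; congr (_ * _).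
by apply: eq_bigr => j ji; rewrite mnmDE mnm1E eq_sym (negbTE ji) addn0.
Qed.

Lemma mtcoefD m e f : (forall i, (e i == 0%N) || (f i == 0%N)) ->
  mtcoef m (e + f)%MM = mtcoef m e * mtcoef m f.
Proof.
move=> disj; rewrite /mtcoef -big_split; apply: eq_bigr => i _ /=; rewrite mnmDE.
by case/orP: (disj i) => /eqP ->; rewrite /tcoef big_ord0 ?mulr1 ?mul1r ?addn0.
Qed.

End TCoefficients.

Arguments mtcoef {F n}.

Section BlockSupport.
Variables (F : fieldType) (n : nat).
Implicit Types (G Q : {mpoly F[n]}).

Definition supp_block (o k : nat) G : Prop :=
  forall e, e \in msupp G -> forall i : 'I_n, e i != 0%N -> (o <= i < o + k)%N.

Lemma supp_block1 o k : supp_block o k 1.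
Proof. by move=> e; rewrite msupp1 inE => /eqP -> i; rewrite mnm0E. Qed.

Lemma supp_blockD o k G Q :
  supp_block o k G -> supp_block o k Q -> supp_block o k (G + Q).
Proof. by move=> sG sQ e /msuppD_le; rewrite mem_cat => /orP [/sG|/sQ]. Qed.

Lemma supp_blockZ o k a G : supp_block o k G -> supp_block o k (a *: G).
Proof. by move=> sG e /msuppZ_le /sG. Qed.

Lemma supp_blockM o k G Q :
  supp_block o k G -> supp_block o k Q -> supp_block o k (G * Q).
Proof.
move=> sG sQ e /msuppM_le /allpairsP [[e1 e2] /= [e1G e2Q ->]] i.
by rewrite mnmDE addn_eq0 negb_and => /orP [/(sG _ e1G)|/(sQ _ e2Q)].
Qed.

Lemma supp_block_exp o k G s : supp_block o k G -> supp_block o k (G ^+ s).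
Proof.
move=> sG; elim: s => [|s IH]; first exact: supp_block1.
by rewrite exprS; apply: supp_blockM.
Qed.

Lemma supp_block_widen o k o' k' G :
  (o' <= o)%N -> (o + k <= o' + k')%N -> supp_block o k G -> supp_block o' k' G.
Proof.
move=> le_o le_ok sG e eG i /(sG _ eG i) /andP [lb ub].
by rewrite (leq_trans le_o lb) (leq_trans ub le_ok).
Qed.

Lemma supp_block_block_sum o k : supp_block o k (block_sum F n o k).
Proof.
rewrite /block_sum; elim/big_rec: _ => [|i Q ik sQ].
  by move=> e; rewrite msupp0.
apply: supp_blockD sQ => e; rewrite msuppX inE => /eqP -> j.
by rewrite mnm1E eqb0 negbK => /eqP <-.
Qed.

Lemma supp_block_binom o k s :
  supp_block o k ((s`!%:R)^-1 *: (- block_sum F n o k) ^+ s).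
Proof.
apply/supp_blockZ/supp_block_exp; rewrite -scaleN1r.
exact/supp_blockZ/supp_block_block_sum.
Qed.

Lemma supp_block_full G : supp_block 0 n G.
Proof. by move=> e _ i _; rewrite leq0n ltn_ord. Qed.

Lemma supp_block_mdeg o k G e : supp_block o k G -> e \in msupp G ->
  mdeg e = (\sum_(i < n | (o <= i < o + k)%N) e i)%N.
Proof.
move=> sG eG; rewrite mdegE (bigID (fun i : 'I_n => (o <= i < o + k)%N)) /=.
rewrite [X in (_ + X)%N]big1 ?addn0 // => i out.
by apply/eqP; apply: contraNT out; apply: sG.
Qed.

Definition block_total (m : 'I_n -> int) (o k : nat) : int :=
  \sum_(i < n | (o <= i < o + k)%N) m i.

Lemma block_total_cat (m : 'I_n -> int) o k k' :
  block_total m o k + block_total m (o + k) k' = block_total m o (k + k').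
Proof.
rewrite /block_total [RHS](bigID (fun i : 'I_n => (i < o + k)%N)) /=.
by congr (_ + _); apply: eq_bigl => i; apply/idP/idP; lia.
Qed.

End BlockSupport.

Section TLift.
Variables (F : fieldType) (n : nat) (V : lmodType F).
Implicit Types (G Q : {mpoly F[n]}) (m : 'I_n -> int) (h : nat -> V).

(* Pairing G with t^(m 0) ⊗ ... ⊗ t^(m (n-1)) and multiplying out gives
   \sum_e G@_e (mtcoef m e) t^(\sum_i m i - mdeg e); tlift m h applies h to the
   degree mdeg e of each term. *)
Definition tlift m h G : V := mlift (fun e => mtcoef m e *: h (mdeg e)) G.

Lemma tlift_is_linear m h : linear (tlift m h).
Proof. exact: mlift_is_linear. Qed.

Lemma eq_tlift m h h' G : h =1 h' -> tlift m h G = tlift m h' G.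
Proof. by move=> eq_h; apply: eq_mlift => e _; rewrite eq_h. Qed.

Lemma tlift1 m h : tlift m h 1 = h 0%N.
Proof. by rewrite /tlift mlift1 mtcoef0 mdeg0 scale1r. Qed.

Lemma tlift_h_linear m a h h' G :
  tlift m (fun j => a *: h j + h' j) G = a *: tlift m h G + tlift m h' G.
Proof.
rewrite /tlift -mlift_phi_linear; apply: eq_mlift => e _.
by rewrite scalerDr !scalerA mulrC.
Qed.

Lemma tlift_hZ m a h G : tlift m (fun j => a *: h j) G = a *: tlift m h G.
Proof. by rewrite /tlift -mlift_phiZ; apply: eq_mlift => e _; rewrite !scalerA mulrC. Qed.

Lemma tlift_h_sum m I r (P : pred I) (h : I -> nat -> V) G :
  tlift m (fun j => \sum_(i <- r | P i) h i j) G = \sum_(i <- r | P i) tlift m (h i) G.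
Proof. by rewrite /tlift -mlift_phi_sum; apply: eq_mlift => e _; rewrite scaler_sumr. Qed.

Lemma tlift_h0 m G : tlift m (fun=> 0) G = 0.
Proof. by rewrite /tlift (eq_mlift (psi := fun=> 0)) ?mlift_phi0 // => e _; rewrite scaler0. Qed.

Lemma tlift_mul_block m h o k G : supp_block o k G ->
  tlift m h (G * block_sum F n o k) =
  tlift m (fun j => (j%:R - (block_total m o k)%:~R) *: h j.+1) G.
Proof.
move=> sG; rewrite /block_sum mulr_sumr (lin_sum (tlift_is_linear _ _)).
under eq_bigr => i _ do rewrite /tlift mlift_mulX.
rewrite -mlift_phi_sum; apply: eq_mlift => e eG /=.
under eq_bigr => i _ do rewrite mtcoefU mdegD mdeg1 addn1 -scalerA.
rewrite -scaler_sumr -scaler_suml sumrB (supp_block_mdeg sG eG) natr_sum.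
by rewrite /block_total rmorph_sum.
Qed.

Lemma tlift_mul_block_exp m h o k s G : supp_block o k G ->
  tlift m h (G * block_sum F n o k ^+ s) =
  tlift m (fun j => (\prod_(r < s) ((j + r)%:R - (block_total m o k)%:~R)) *: h (j + s)%N) G.
Proof.
elim: s G h => [|s IH] G h sG.
  by rewrite expr0 mulr1; apply: eq_tlift => j; rewrite big_ord0 scale1r addn0.
rewrite exprS mulrA IH; last exact/supp_blockM/supp_block_block_sum.
rewrite tlift_mul_block //; apply: eq_tlift => j /=.
rewrite scalerA big_ord_recl addn0 addSnnS; congr (_ *: _); congr (_ * _).
by apply: eq_bigr => r _; rewrite /= addSnnS.
Qed.

Lemma binZ_sub_nat (M : int) (j s : nat) :
  binZ F (M - j%:Z) s = (s`!%:R)^-1 * ((-1) ^+ s * \prod_(r < s) ((j + r)%:R - M%:~R)).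
Proof.
have -> : (-1) ^+ s = \prod_(r < s) (-1 : F) by rewrite prodr_const card_ord.
rewrite /binZ mulrC -big_split /=; congr (_ * _); apply: eq_bigr => r _.
by rewrite !intrB natrD -[(j%:Z)%:~R]/(j%:R) -[(r%:Z)%:~R]/(r%:R) mulN1r; ring.
Qed.

Lemma tlift_mul_binom m h o k s G : supp_block o k G ->
  tlift m h (G * ((s`!%:R)^-1 *: (- block_sum F n o k) ^+ s)) =
  tlift m (fun j => binZ F (block_total m o k - j%:Z) s *: h (j + s)%N) G.
Proof.
move=> sG; rewrite -scaleN1r exprZn scalerA -scalerAr (linZ (tlift_is_linear _ _)).
rewrite tlift_mul_block_exp // -tlift_hZ; apply: eq_tlift => j.
by rewrite binZ_sub_nat !scalerA mulrA.
Qed.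

Lemma tlift_mul_disjoint m h o k k' G Q :
  supp_block o k G -> supp_block (o + k) k' Q ->
  tlift m h (G * Q) = tlift m (fun j => tlift m (fun j' => h (j + j')%N) Q) G.
Proof.
move=> sG sQ; rewrite /tlift mlift_mul; apply: eq_mlift => e eG.
rewrite -mlift_phiZ; apply: eq_mlift => f fQ.
rewrite mdegD scalerA mtcoefD // => i.
case: (boolP (e i == 0%N)) => //= /(sG _ eG i) /andP [_ lt_i].
apply/negPn/negP => /(sQ _ fQ i) /andP [le_i _].
by move: (leq_ltn_trans le_i lt_i); rewrite ltnn.
Qed.

End TLift.

Lemma sum_iota_widen (V : zmodType) (f : nat -> V) k S :
  (k <= S)%N -> (forall s, (k <= s)%N -> f s = 0) ->
  \sum_(s <- iota 0 k) f s = \sum_(s <- iota 0 S) f s.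
Proof.
move=> le_kS f0; rewrite -(subnKC le_kS) iotaD big_cat /=.
rewrite [X in _ = _ + X]big1_seq ?addr0 // => s /andP [_].
by rewrite mem_iota => /andP [le_ks _]; apply: f0.
Qed.

Section Products.
Variables (F : fieldType) (C : lmodType F) (prod : nat -> C -> C -> C).
Variables (N : C -> C -> nat) (n : nat) (W : lmodType F).
Hypothesis prod_linl : forall s c, linear (prod s ^~ c).
Hypothesis prod_linr : forall s c, linear (prod s c).
Hypothesis prodN : forall c d s, (N c d <= s)%N -> prod s c d = 0.
Implicit Types (m : 'I_n -> int) (gam : int -> C -> W).
Implicit Types (x y : coeff_rep C) (X Y : pseudo_rep C n).

(* A family gam of linear maps is a linear map k[t,t^-1] ⊗ C -> W, t^K ⊗ c |-> gam K c.
   ceval applies it to a formal sum of elements c(K) of Coeff C, and peval applies it to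
   Phi_m X, where M is the total weight of the positions occupied by X. *)
Definition ceval gam x : W := \sum_(p <- x) gam p.1 p.2.

Definition peval m (M : int) gam X : W :=
  \sum_(q <- X) tlift m (fun j => gam (M - j%:Z) q.2) q.1.

(* X, placed in the tensor positions o, ..., o+k-1, is sent to x by Phi_m. *)
Definition represents m o k x X : Prop :=
  (forall gam, (forall K, linear (gam K)) ->
     ceval gam x = peval m (block_total m o k) gam X) /\
  (forall q, q \in X -> supp_block o k q.1).

Definition nbound (A B : eqType) (x : seq (A * C)) (y : seq (B * C)) : nat :=
  \max_(p <- x) \max_(q <- y) N p.2 q.2.

Lemma nbound_ge (A B : eqType) (x : seq (A * C)) (y : seq (B * C)) p q :
  p \in x -> q \in y -> (N p.2 q.2 <= nbound x y)%N.
Proof.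
move=> px qy; apply: leq_trans (leq_bigmax_seq _ px isT).
exact: (leq_bigmax_seq (F := fun q => N p.2 q.2)).
Qed.

Lemma ceval_coeff_mul gam x y S :
  (forall K, linear (gam K)) -> (nbound x y <= S)%N ->
  ceval gam (coeff_mul prod N x y) =
  \sum_(s <- iota 0 S) ceval (fun K1 c =>
     ceval (fun K2 d => gam (K1 + K2 - s%:Z) (binZ F K1 s *: prod s c d)) y) x.
Proof.
move=> gam_lin bS.
transitivity (\sum_(p <- x) \sum_(q <- y) \sum_(s <- iota 0 S)
    gam (p.1 + q.1 - s%:Z) (binZ F p.1 s *: prod s p.2 q.2)).
  rewrite /ceval /coeff_mul big_flatten big_map; apply: eq_big_seq => p px.
  rewrite big_flatten big_map; apply: eq_big_seq => q qy; rewrite big_map.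
  apply: sum_iota_widen => [|s /prodN ->]; last by rewrite scaler0 (lin0 (gam_lin _)).
  exact: leq_trans (nbound_ge px qy) bS.
by rewrite /ceval; under eq_bigr do rewrite exchange_big; rewrite exchange_big.
Qed.

Lemma peval_pseudo_mul m M gam o k X Y S :
  (forall K, linear (gam K)) -> (nbound X Y <= S)%N ->
  peval m M gam (pseudo_mul prod N o k X Y) =
  \sum_(s <- iota 0 S) \sum_(q <- X) \sum_(q' <- Y)
    tlift m (fun j => gam (M - j%:Z) (prod s q.2 q'.2))
      (q.1 * ((s`!%:R)^-1 *: (- block_sum F n o k) ^+ s) * q'.1).
Proof.
move=> gam_lin bS.
transitivity (\sum_(q <- X) \sum_(q' <- Y) \sum_(s <- iota 0 S)
    tlift m (fun j => gam (M - j%:Z) (prod s q.2 q'.2))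
      (q.1 * ((s`!%:R)^-1 *: (- block_sum F n o k) ^+ s) * q'.1)).
  rewrite /peval /pseudo_mul big_flatten big_map; apply: eq_big_seq => q qX.
  rewrite big_flatten big_map; apply: eq_big_seq => q' qY; rewrite big_map.
  apply: sum_iota_widen => [|s /prodN -> /=]; last first.
    by apply: (etrans _ (tlift_h0 _ m _)); apply: eq_tlift => j; apply: lin0 (gam_lin _).
  exact: leq_trans (nbound_ge qX qY) bS.
by under eq_bigr do rewrite exchange_big; rewrite exchange_big.
Qed.

Lemma peval_family_linear (U : lmodType F) (gamf : U -> int -> C -> W) m M X :
  (forall K c, linear (fun u => gamf u K c)) -> linear (fun u => peval m M (gamf u) X).
Proof.
move=> gamf_lin a u v; rewrite /peval scaler_sumr -big_split; apply: eq_bigr => q _ /=.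
by rewrite -tlift_h_linear; apply: eq_tlift => j; apply: gamf_lin.
Qed.

Lemma supp_pseudo_mul o k k' X Y :
  (forall q, q \in X -> supp_block o k q.1) ->
  (forall q, q \in Y -> supp_block (o + k) k' q.1) ->
  forall q, q \in pseudo_mul prod N o k X Y -> supp_block o (k + k') q.1.
Proof.
move=> sX sY _ /flattenP [_ /mapP [q qX ->] /flattenP [_ /mapP [q' qY ->] /mapP [s _ ->]]].
apply: supp_blockM; first apply: supp_blockM.
- by apply: (supp_block_widen _ _ (sX _ qX)); lia.
- by apply: (supp_block_widen _ _ (@supp_block_binom F n o k s)); lia.
- by apply: (supp_block_widen _ _ (sY _ qY)); lia.
Qed.

Lemma represents_mul m o k k' x y X Y :
  represents m o k x X -> represents m (o + k) k' y Y ->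
  represents m o (k + k') (coeff_mul prod N x y) (pseudo_mul prod N o k X Y).
Proof.
move=> [Rx sX] [Ry sY]; split=> [gam gam_lin|]; last exact: supp_pseudo_mul.
set S := maxn (nbound x y) (nbound X Y).
rewrite (ceval_coeff_mul gam_lin (leq_maxl _ _ : nbound x y <= S)%N).
rewrite (peval_pseudo_mul _ _ _ _ gam_lin (leq_maxr _ _ : nbound X Y <= S)%N).
rewrite -block_total_cat; apply: eq_bigr => s _.
pose gam2 K1 c K2 d := gam (K1 + K2 - s%:Z) (binZ F K1 s *: prod s c d).
have gam2_lin K1 c K2 : linear (gam2 K1 c K2).
  by move=> a d d'; rewrite /gam2 prod_linr scalerDr scalerA mulrC -scalerA; apply: gam_lin.
have gam2_linc K1 K2 d : linear (fun c => gam2 K1 c K2 d).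
  by move=> a c c'; rewrite /gam2 prod_linl scalerDr scalerA mulrC -scalerA; apply: gam_lin.
rewrite (_ : ceval _ x =
    ceval (fun K1 c => peval m (block_total m (o + k) k') (gam2 K1 c) Y) x); last first.
  by apply: eq_bigr => p _; rewrite /= Ry // => K2; apply: gam2_lin.
rewrite Rx => [|K1]; last exact: peval_family_linear.
apply: eq_big_seq => q qX; rewrite tlift_h_sum; apply: eq_big_seq => q' qY.
have sqB := supp_blockM (sX _ qX) (@supp_block_binom F n o k s).
rewrite (tlift_mul_disjoint _ _ sqB (sY _ qY)) (tlift_mul_binom _ _ _ (sX _ qX)).
apply: eq_tlift => j; rewrite -tlift_hZ; apply: eq_tlift => j'.
by rewrite /gam2 (linZ (gam_lin _)); congr (_ *: gam _ _); lia.
Qed.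

End Products.

Lemma perm_argsE (X : Type) (x0 : X) n (s : 'S_n) (a : 'I_n -> X) i (lt_in : (i < n)%N) :
  perm_args x0 s a i = a (s (Ordinal lt_in)).
Proof. by rewrite /perm_args insubT. Qed.

Section PermuteFactors.
Variables (F : fieldType) (n : nat) (V : lmodType F) (s : 'S_n).

Lemma comp_mpoly_permX (e : 'X_{1..n}) :
  'X_[e] \mPo [tuple 'X_(s i) | i < n] = 'X_[[multinom e (s^-1 i)%g | i < n]] :> {mpoly F[n]}.
Proof.
rewrite comp_mpolyX (mpolyXE _ s); apply: eq_bigr => i _.
by rewrite tnth_mktuple mnmE permK.
Qed.

Lemma mtcoef_perm (m : 'I_n -> int) (e : 'X_{1..n}) :
  mtcoef m [multinom e (s^-1 i)%g | i < n] = mtcoef (fun i => m (s i)) e :> F.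
Proof.
rewrite /mtcoef (reindex_inj (@perm_inj _ s)); apply: eq_bigr => i _.
by rewrite mnmE permK.
Qed.

Lemma tlift_perm m (h : nat -> V) (G : {mpoly F[n]}) :
  tlift m h (G \mPo [tuple 'X_(s i) | i < n]) = tlift (fun i => m (s i)) h G.
Proof.
rewrite comp_mpolyEX (lin_sum (tlift_is_linear _ _)); apply: eq_bigr => e _.
rewrite (linZ (tlift_is_linear _ _)) comp_mpoly_permX /tlift mliftX.
by rewrite mtcoef_perm mdeg_mperm.
Qed.

End PermuteFactors.

Section Evaluation.
Variables (F : fieldType) (C : lmodType F) (prod : nat -> C -> C -> C).
Variables (N : C -> C -> nat) (n : nat) (W : lmodType F).
Hypothesis prod_linl : forall s c, linear (prod s ^~ c).
Hypothesis prod_linr : forall s c, linear (prod s c).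
Hypothesis prodN : forall c d s, (N c d <= s)%N -> prod s c d = 0.

Lemma represents_brk (m : 'I_n -> int) (g : nat -> C) (g' : nat -> coeff_rep C) t o :
  (forall i (lt_in : (i < n)%N), g' i = [:: (m (Ordinal lt_in), g i)]) ->
  (o + leaves t <= n)%N ->
  represents W m o (leaves t) (brk_eval (coeff_mul prod N) t g' o) (pseudo_eval prod N n t g o).
Proof.
move=> g'E; elim: t o => [|l IHl r IHr] o /= le_n; last first.
  by apply: (represents_mul prod_linl prod_linr prodN); [apply: IHl | apply: IHr]; lia.
have lt_on : (o < n)%N by rewrite -addn1.
split=> [gam gam_lin|q]; last by rewrite inE => /eqP ->; apply: supp_block1.
rewrite (g'E _ lt_on) /ceval /peval !big_seq1 tlift1 subr0 /block_total.
rewrite (big_pred1 (Ordinal lt_on)) // => i /=.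
by rewrite addn1 ltnS -eqn_leq eq_sym.
Qed.

Lemma represents_term (s : 'S_n) (p : F * brk) m a (gam : int -> C -> W) :
  leaves p.2 = n -> (forall K, linear (gam K)) ->
  ceval gam (coeff_scale p.1
    (brk_eval (coeff_mul prod N) p.2 (perm_args [::] s (fun i => [:: (m i, a i)])) 0)) =
  peval m (\sum_i m i) gam
    [seq (p.1 *: q.1, q.2) | q <- perm_factors s (pseudo_eval prod N n p.2 (perm_args 0 s a) 0)].
Proof.
move=> lp gam_lin; rewrite /ceval /peval !big_map /=.
under eq_bigr do rewrite (linZ (gam_lin _)).
under [RHS]eq_bigr do rewrite (linZ (tlift_is_linear _ _)) tlift_perm.
rewrite -!scaler_sumr; congr (_ *: _).
have g'E i (lt_in : (i < n)%N) : perm_args [::] s (fun i => [:: (m i, a i)]) i =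
    [:: (m (s (Ordinal lt_in)), perm_args 0 s a i)].
  by rewrite !perm_argsE.
have [Rp _] := represents_brk (m := fun i => m (s i)) (o := 0) g'E (eq_leq lp).
have total_ms : block_total (fun i => m (s i)) 0 (leaves p.2) = \sum_i m i.
  rewrite lp /block_total [RHS](reindex_inj (@perm_inj _ s)).
  by apply: eq_bigl => i; rewrite leq0n ltn_ord.
by have := Rp gam gam_lin; rewrite total_ms /ceval /peval => ->.
Qed.

Lemma represents_poly (P : ml_poly F n) m a (gam : int -> C -> W) :
  ml_poly_wf P -> (forall K, linear (gam K)) ->
  ceval gam (coeff_eval prod N P (fun i => [:: (m i, a i)])) =
  peval m (\sum_i m i) gam (pseudo_poly_eval prod N P a).
Proof.
move=> wfP gam_lin; rewrite /coeff_eval /pseudo_poly_eval /ceval /peval.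
rewrite !big_flatten !big_map; apply: eq_bigr => s _.
rewrite [LHS]big_flatten [RHS]big_flatten !big_map; move: (wfP s).
elim: (P s) => [|p ps IH] /=; first by rewrite !big_nil.
case/andP => /eqP lp /IH {}IH; rewrite !big_cons IH; congr (_ + _).
exact: represents_term.
Qed.

End Evaluation.

Section Residue.
Variables (F : fieldType) (C : lmodType F) (D : C -> C).
Hypothesis charF0 : [pchar F] =i pred0.
Hypothesis D_lin : linear D.

(* x |-> c where x = t^(-1) ⊗_H c + (terms t^K ⊗ _ with K >= 0), computed through
   t^(-1-j) ⊗_H c = t^(-1) ⊗_H D^j c / j!. *)
Definition residue (K : int) (c : C) : C :=
  if K is Negz j then (j`!%:R)^-1 *: iter j D c else 0.

Lemma residue_linear K : linear (residue K).
Proof.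
case: K => [k|j] a c c' /=; first by rewrite scaler0 addr0.
have iter_lin i : linear (iter i D) by elim: i => // i IH b x y; rewrite /= IH D_lin.
by rewrite iter_lin scalerDr !scalerA mulrC.
Qed.

Lemma residue_bal K c : residue K (D c) = - (K%:~R *: residue (K - 1) c).
Proof.
case: K => [[|k]|j] /=; rewrite ?scale0r ?scaler0 ?oppr0 //.
rewrite addn0 -iterS -iterSr scalerA NegzE intrN mulNr scaleNr opprK.
rewrite -[(j.+1%:Z)%:~R]/(j.+1%:R) factS natrM invfM mulrA mulfV ?mul1r //.
by move/pcharf0P: charF0 => ->.
Qed.

End Residue.

Section Separation.
Variables (F : fieldType) (C : lmodType F) (D : C -> C) (n : nat).
Hypothesis charF0 : [pchar F] =i pred0.
Variables (W : lmodType F) (beta : {mpoly F[n]} -> C -> W).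
Hypothesis beta_linl : forall c, linear (beta ^~ c).
Hypothesis beta_linr : forall G, linear (beta G).
Hypothesis beta_bal : forall G c, beta (G * \sum_(i < n) 'X_i) c = beta G (D c).
Variable i0 : 'I_n.
Implicit Types (G : {mpoly F[n]}) (e : 'X_{1..n}) (m : 'I_n -> int).

Definition res_form m G c : C := tlift m (fun j => residue D (\sum_i m i - j%:Z) c) G.

Lemma res_form_linl m c : linear (res_form m ^~ c).
Proof. exact: tlift_is_linear. Qed.

Lemma res_form_bal m G c : res_form m (G * \sum_(i < n) 'X_i) c = res_form m G (D c).
Proof.
have full (i : 'I_n) : (0 <= i < 0 + n)%N = true by rewrite leq0n add0n ltn_ord.
rewrite -(eq_bigl _ _ full) -/(block_sum F n 0 n) /res_form.
rewrite (tlift_mul_block _ _ (@supp_block_full F n G)).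
apply: eq_tlift => j; rewrite /block_total (eq_bigl _ _ full) residue_bal // -scaleNr.
congr (_ *: residue _ _ _); first by rewrite intrB opprB.
by rewrite -addn1 PoszD opprD addrA.
Qed.

(* For e i0 = e' i0 = 0, res_form (dual_weight e') 'X_[e] vanishes unless e = e': the
   residue forces mdeg e >= mdeg e', and mtcoef (dual_weight e') e = 0 as soon as
   e i > e' i for some i. *)
Definition dual_weight e : 'I_n -> int := fun i => if i == i0 then -1 else (e i)%:Z.

Lemma sum_dual_weight e : e i0 = 0%N -> \sum_i dual_weight e i = (mdeg e)%:Z - 1.
Proof.
move=> e0; rewrite (bigD1 i0) //= /dual_weight eqxx mdegE [in RHS](bigD1 i0) //= e0 add0n.
rewrite addrC -[in RHS]natz natr_sum; congr (_ + _).
by apply: eq_bigr => i ne_i; rewrite (negbTE ne_i) natz.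
Qed.

Lemma mtcoef_dual_neq0 e : e i0 = 0%N -> mtcoef (dual_weight e) e != 0 :> F.
Proof.
move=> e0; apply/prodf_neq0 => i _; rewrite /dual_weight.
have [->|ne_i] := eqVneq i i0; first by rewrite e0 /tcoef big_ord0 oner_neq0.
apply/prodf_neq0 => j _; rewrite -[((e i)%:Z)%:~R]/((e i)%:R).
have lt_j := ltn_ord j.
rewrite -oppr_eq0 opprB -natrB ?(ltnW lt_j) // -(subnSK lt_j).
by move/pcharf0P: charF0 => ->.
Qed.

Lemma mtcoef_dual_eq0 e e' i : (e' i < e i)%N -> i != i0 ->
  mtcoef (dual_weight e') e = 0 :> F.
Proof.
move=> lt_i ne_i; rewrite /mtcoef (bigD1 i) //= /dual_weight (negbTE ne_i).
rewrite /tcoef (bigD1 (Ordinal lt_i)) //= -[((e' i)%:Z)%:~R]/((e' i)%:R).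
by rewrite subrr !mul0r.
Qed.

Lemma res_form_dual_diag e c : e i0 = 0%N ->
  res_form (dual_weight e) 'X_[e] c = mtcoef (dual_weight e) e *: c.
Proof.
move=> e0; rewrite /res_form /tlift mliftX sum_dual_weight //.
have -> : (mdeg e)%:Z - 1 - (mdeg e)%:Z = -1 by rewrite addrAC subrr add0r.
by rewrite /= fact0 invr1 scale1r.
Qed.

Lemma res_form_dual_offdiag e e' c : e i0 = 0%N -> e' i0 = 0%N -> e != e' ->
  res_form (dual_weight e') 'X_[e] c = 0.
Proof.
move=> e0 e'0 ne_e; rewrite /res_form /tlift mliftX sum_dual_weight //.
have [lt_deg|le_deg] := ltnP (mdeg e) (mdeg e').
  by rewrite (_ : _ - _ = Posz (mdeg e' - mdeg e - 1)) ?scaler0 //; lia.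
have [i lt_i|ge_e] := pickP (fun i => e' i < e i)%N.
  have ne_i : i != i0 by apply: contraTneq lt_i => ->; rewrite e0.
  by rewrite (mtcoef_dual_eq0 lt_i ne_i) scale0r.
have le_e : (e <= e')%MM.
  by apply/mnm_lepP => i; move: (ge_e i) => /= /negbT; rewrite -leqNgt.
have : mdeg (e' - e)%MM = 0%N by have := congr1 mdeg (submK le_e); rewrite mdegD; lia.
move/eqP; rewrite mdeg_eq0 => /eqP de0; case/eqP: ne_e.
by rewrite -(submK le_e) de0 add0m.
Qed.

Definition beta_dual d G c : W :=
  \sum_(e : 'X_{1..n < d} | e i0 == 0%N)
    (mtcoef (dual_weight e) e)^-1 *: beta 'X_[e] (res_form (dual_weight e) G c).

Lemma beta_dual_linl d c : linear (beta_dual d ^~ c).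
Proof.
move=> a G G'; rewrite /beta_dual scaler_sumr -big_split; apply: eq_bigr => e _ /=.
by rewrite (linP (res_form_linl _ c)) (linP (beta_linr _)) scalerDr !scalerA mulrC.
Qed.

Lemma beta_dual_bal d G c : beta_dual d (G * \sum_(i < n) 'X_i) c = beta_dual d G (D c).
Proof. by apply: eq_bigr => e _; rewrite res_form_bal. Qed.

Lemma beta_dualX0 d e c : e i0 = 0%N -> (mdeg e < d)%N ->
  beta 'X_[e] c = beta_dual d 'X_[e] c.
Proof.
move=> e0 lt_d; pose eb : 'X_{1..n < d} := BMultinom lt_d.
rewrite /beta_dual (bigD1 eb) /=; last by rewrite e0.
rewrite res_form_dual_diag // (linZ (beta_linr _)) scalerA mulVf ?mtcoef_dual_neq0 //.
rewrite scale1r big1 ?addr0 // => e' /andP [/eqP e'0 ne_e'].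
rewrite res_form_dual_offdiag // ?(lin0 (beta_linr _)) ?scaler0 //.
by apply: contra ne_e' => /eqP ee'; rewrite bmeqP /= ee'.
Qed.

Lemma beta_dualX d e c : (mdeg e < d)%N -> beta 'X_[e] c = beta_dual d 'X_[e] c.
Proof.
move ek : (e i0) => k; elim: k e ek c => [|k IH] e ek c lt_d; first exact: beta_dualX0.
set e1 := (e - U_(i0))%MM.
have eE : e = (e1 + U_(i0))%MM by rewrite submK // lep1mP ek.
have e1_i0 : e1 i0 = k by rewrite mnmBE mnm1E eqxx ek subn1.
have deg_e : mdeg e = (mdeg e1).+1 by rewrite eE mdegD mdeg1 addn1.
(* Balance trades D_i0 for D_1 + ... + D_n, lowering the exponent of D_i0. *)
have XE : 'X_[e] = 'X_[e1] * \sum_(i < n) 'X_i - \sum_(i < n | i != i0) 'X_[e1 + U_(i)]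
    :> {mpoly F[n]}.
  rewrite eE mpolyXD (bigD1 i0) //= mulrDr mulr_sumr.
  by under [X in _ = _ - X]eq_bigr do rewrite mpolyXD; rewrite addrK.
rewrite XE (linB (beta_linl c)) (linB (beta_dual_linl d c)) beta_bal beta_dual_bal.
rewrite (lin_sum (beta_linl c)) (lin_sum (beta_dual_linl d c)) IH //; last by lia.
congr (_ - _); apply: eq_bigr => i ne_i; apply: IH.
  by rewrite mnmDE mnm1E (negbTE ne_i) addn0.
by rewrite mdegD mdeg1; lia.
Qed.

Lemma beta_dualE d G c : (msize G <= d)%N -> beta G c = beta_dual d G c.
Proof.
move=> le_d; apply: (@eq_linear_mpoly _ _ _ (beta ^~ c) (beta_dual d ^~ c)).
- exact: beta_linl.
- exact: beta_dual_linl.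
by move=> e eG; apply/beta_dualX/(leq_trans (msize_mdeg_lt eG) le_d).
Qed.

Lemma beta_sum_eq0 (X : pseudo_rep C n) :
  (forall m, \sum_(q <- X) res_form m q.1 q.2 = 0) -> \sum_(q <- X) beta q.1 q.2 = 0.
Proof.
move=> res_form0; set d := \max_(q <- X) msize q.1.
rewrite (eq_big_seq (fun q => beta_dual d q.1 q.2)) => [|q qX]; last first.
  by apply: beta_dualE; apply: (leq_bigmax_seq (F := fun q => msize q.1)).
rewrite /beta_dual exchange_big big1 // => e _.
by rewrite -scaler_sumr -(lin_sum (beta_linr _)) res_form0 (lin0 (beta_linr _)) scaler0.
Qed.

End Separation.

Lemma Delta_X (F : fieldType) n : Delta n 'X = \sum_(i < n) 'X_i :> {mpoly F[n]}.
Proof. by rewrite /Delta (map_polyX (mpolyC n (R := F))) hornerX. Qed.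

Lemma hact_X (F : fieldType) (C : lmodType F) (D : C -> C) c : hact D 'X c = D c.
Proof.
rewrite /hact size_polyX !big_ord_recl big_ord0 /= !coefX /=.
by rewrite scale0r add0r addr0 scale1r.
Qed.

Lemma leaves_gt0 t : (0 < leaves t)%N.
Proof. by elim: t => //= l IHl r _; rewrite addn_gt0 IHl. Qed.

Theorem theorem3p1 (F : fieldType) (charF0 : [pchar F] =i pred0)
    (C : lmodType F) (D : C -> C) (prod : nat -> C -> C -> C)
    (N : C -> C -> nat) (confC : is_conformal D prod N)
    (n : nat) (P : ml_poly F n) (wfP : ml_poly_wf P) :
  coeff_satisfies D prod N P ->
  forall a : 'I_n -> C, pseudo_zero D (pseudo_poly_eval prod N P a).
Proof.
move=> f_id a W beta beta_linl beta_linr beta_bal.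
have [D_lin [prodL [prodR [prodN _]]]] := confC.
have [n0|n_gt0] := posnP n.
  rewrite /pseudo_poly_eval big_flatten big_map big1 // => s _.
  have -> : P s = [::] by case: (P s) (wfP s) => // p ps /andP [/eqP lp _];
    move: (leaves_gt0 p.2); rewrite lp n0.
  by rewrite big_nil.
have beta_linl' c : linear (beta ^~ c) by move=> k G G'; apply: beta_linl.
have beta_linr' G : linear (beta G) by move=> k c c'; apply: beta_linr.
have beta_bal' G c : beta (G * \sum_(i < n) 'X_i) c = beta G (D c).
  by rewrite -Delta_X beta_bal hact_X.
apply: (beta_sum_eq0 charF0 beta_linl' beta_linr' beta_bal' (Ordinal n_gt0)).
move=> m; transitivity (ceval (residue D) (coeff_eval prod N P (fun i => [:: (m i, a i)]))).
  have prod_linl s c : linear (prod s ^~ c) by move=> k x y; apply: prodL.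
  have prod_linr s c : linear (prod s c) by move=> k x y; apply: prodR.
  by symmetry; apply: (represents_poly prod_linl prod_linr prodN) => //; apply: residue_linear.
by apply: f_id => [K|K c]; [apply: residue_linear | apply: residue_bal].
Qed.
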